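(* Fix an edge $(i,t)\in E$, a partial sample path $\omega_{t-1}$, and seed values $Y_{-i}=(y_j)_{j\ne i}$. Let $I^t_{-i}$ be the set of neighbours $j\neq i$ of $t$ that are still available when $t$ arrives in the execution of Algorithm 1 on the instance with $i$ removed (same $Y_{-i}$, outcomes of earlier edges given by $\omega_{t-1}$). Define $y^c_i\in[0,1]$ by $p_{it}r_i(1-g(y^c_i))=\max_{j\in I^t_{-i}}p_{jt}r_j(1-g(y_j))$, with $y^c_i=1$ if $I^t_{-i}=\emptyset$ and $y^c_i=0$ if no such value exists. Then for every $y_i\in[0,1]$, $E[\lambda^Y_t\mid\omega_{t-1}]\ge p_{it}r_i(1-g(y^c_i))$; consequently $E_{y_i\sim U[0,1]}\big[E[\lambda^Y_t\mid\omega_{t-1}]\big]\ge p_{it}r_i(1-g(y^c_i))$.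
   Context: Online stochastic rewards problem: bipartite graph $G=(I,T,E)$, resources $i\in I$ with rewards $r_i>0$ and unit capacity, arrivals $t=1,2,\dots$ with edge probabilities $p_{it}\in[0,1]$; each arrival is offered at most one available neighbour, the offer succeeds independently with probability $p_{it}$, earning $r_i$ and making $i$ unavailable; otherwise $i$ stays available. A sample path $\omega$ fixes for every edge an outcome $\mathbb{1}^\omega(i,t)\in\{0,1\}$ (independent Bernoulli($p_{it}$)); an offer of $i$ to $t$ on $\omega$ succeeds iff $\mathbb{1}^\omega(i,t)=1$. $\omega_{t-1}$ is the restriction of $\omega$ to edges incident to arrivals $t'\le t-1$; $E[\cdot\mid\omega_{t-1}]$ averages over the outcomes of all remaining edges. Algorithm 1: $g(y)=e^{y-1}$; seed $Y=(y_i)_{i\in I}$ with $y_i$ i.i.d. $U[0,1]$; arrival $t$ is offered the available neighbour $i$ maximizing $p_{it}r_i(1-g(y_i))$. Dual variables: all initialized to $0$; whenever Algorithm 1 on $(\omega,Y)$ offers $i$ to $t$, set $\lambda^{Y}_t=r_i(1-g(y_i))\mathbb{1}^\omega(i,t)$ and increase $\theta^{Y}_i$ by $r_ig(y_i)\mathbb{1}^\omega(i,t)$ (dependence on $\omega$ suppressed). *)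

From Stdlib Require Import Reals Lra Arith.
Open Scope R_scope.

(* Conventions:
   - resources are 0..n-1 (nat); arrivals are indexed 0,1,2,... (nat);
   - adj j s : bool  says (j,s) is an edge of E;
   - p j s = p_{js}, r j = r_j;
   - a sample path is w : nat -> nat -> bool, w j s = outcome of edge (j,s);
   - a seed is y : nat -> R (y j = y_j). *)

Definition g (x : R) : R := exp (x - 1).

Definition score (p : nat -> nat -> R) (r : nat -> R) (y : nat -> R)
  (j s : nat) : R := p j s * r j * (1 - g (y j)).

(* Algorithm 1's choice at arrival s, given the current availability [av]:
   among the candidates j < n that are present, available and adjacent to s,
   an index maximising the score (ties broken in favour of the smallest
   index); None if there is no candidate. *)
Fixpoint choose_upto (k : nat) (cand : nat -> bool) (sc : nat -> R) : option nat :=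
  match k with
  | O => None
  | S k' =>
      let b := choose_upto k' cand sc in
      if cand k' then
        match b with
        | None => Some k'
        | Some j => if Rlt_dec (sc j) (sc k') then Some k' else Some j
        end
      else b
  end.

Definition choose (n : nat) (adj : nat -> nat -> bool) (p : nat -> nat -> R)
  (r : nat -> R) (y : nat -> R) (av : nat -> bool) (s : nat) : option nat :=
  choose_upto n (fun j => andb (av j) (adj j s)) (fun j => score p r y j s).

(* Availability of resources just before arrival s, on the instance whose
   resource set is {j | present j} (present = all for the full instance,
   present j = (j != i) for the instance with i removed). *)
Fixpoint avail (n : nat) (adj : nat -> nat -> bool) (p : nat -> nat -> R)
  (r : nat -> R) (present : nat -> bool) (w : nat -> nat -> bool)
  (y : nat -> R) (s : nat) : nat -> bool :=
  match s with
  | O => present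
  | S s' =>
      let av := avail n adj p r present w y s' in
      match choose n adj p r y av s' with
      | Some j => if w j s' then (fun k => if Nat.eqb k j then false else av k) else av
      | None => av
      end
  end.

Definition lambda (n : nat) (adj : nat -> nat -> bool) (p : nat -> nat -> R)
  (r : nat -> R) (w : nat -> nat -> bool) (y : nat -> R) (t : nat) : R :=
  match choose n adj p r y (avail n adj p r (fun _ => true) w y t) t with
  | Some j => r j * (1 - g (y j)) * (if w j t then 1 else 0)
  | None => 0
  end.

Definition upd (b : nat -> bool) (k : nat) (v : bool) : nat -> bool :=
  fun j => if Nat.eqb j k then v else b j.

(* Expectation of f(b) where b 0, ..., b (k-1) are independent Bernoulli(q j)
   (other coordinates fixed to false). *)
Fixpoint bexp (q : nat -> R) (k : nat) (f : (nat -> bool) -> R) : R :=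
  match k with
  | O => f (fun _ => false)
  | S k' => q k' * bexp q k' (fun b => f (upd b k' true))
            + (1 - q k') * bexp q k' (fun b => f (upd b k' false))
  end.

(* The sample path equal to w on arrivals < t, to b on arrival t
   (b j = outcome of edge (j,t)), and (arbitrarily) false afterwards. *)
Definition merge (w : nat -> nat -> bool) (t : nat) (b : nat -> bool) :
  nat -> nat -> bool :=
  fun j s => if Nat.ltb s t then w j s else if Nat.eqb s t then b j else false.

(* E[lambda_t^Y | omega_{t-1}]: average over the outcomes of the edges of
   arrival t (lambda_t does not depend on the edges of later arrivals). *)
Definition cond_exp_lambda (n : nat) (adj : nat -> nat -> bool)
  (p : nat -> nat -> R) (r : nat -> R) (w : nat -> nat -> bool)
  (y : nat -> R) (t : nat) : R :=
  bexp (fun j => p j t) n (fun b => lambda n adj p r (merge w t b) y t).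

Definition set_seed (y : nat -> R) (i : nat) (yi : R) : nat -> R :=
  fun j => if Nat.eqb j i then yi else y j.

Definition in_I_minus (n : nat) (adj : nat -> nat -> bool) (p : nat -> nat -> R)
  (r : nat -> R) (w : nat -> nat -> bool) (y : nat -> R) (i t j : nat) : Prop :=
  (j < n)%nat /\ j <> i /\ adj j t = true /\
  avail n adj p r (fun k => negb (Nat.eqb k i)) w y t j = true.

From Stdlib Require Import Reals.
From Stdlib Require Import Lra Lia Classical.
Open Scope R_scope.

(* 1. The conditional expectation is explicit: averaging over the outcomes of
      the edges of arrival t, E[lambda_t | omega_{t-1}] equals the score
      p_{xt} r_x (1 - g(y_x)) of the resource x that Algorithm 1 offers to t
      (or 0 if t is offered nothing).
   2. Without i, resources are matched no later than with i: every
      resource available at t in the run without i is still available at t in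
      the full run, whatever y_i is.  Hence every j in I^t_{-i} is a candidate
      for t in the full run, and the offered resource scores at least as much
      as j.
   3. The threshold y^c_i satisfies p_{it} r_i (1 - g(y^c_i)) <= max of the
      scores over I^t_{-i} (and = 0 if I^t_{-i} is empty); when the defining
      equation has no solution in [0,1], the maximum exceeds p_{it} r_i (1-g 0),
      since z |-> p_{it} r_i (1 - g z) maps [0,1] onto [0, p_{it} r_i (1-g 0)]. *)

Lemma exp_le_mono x y : x <= y -> exp x <= exp y.
Proof.
  intros Hxy; destruct (Rle_lt_or_eq_dec _ _ Hxy) as [Hlt | ->].
  - left; apply exp_increasing; exact Hlt.
  - right; reflexivity.
Qed.

Lemma ln_le_mono x y : 0 < x -> x <= y -> ln x <= ln y.
Proof.
  intros Hx Hxy; destruct (Rle_lt_or_eq_dec _ _ Hxy) as [Hlt | ->].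
  - left; apply ln_increasing; assumption.
  - right; reflexivity.
Qed.

Lemma g_le_1 x : x <= 1 -> g x <= 1.
Proof.
  intros Hx; unfold g; rewrite <- exp_0 at 2; apply exp_le_mono; lra.
Qed.

Lemma score_nonneg p r y j s :
  0 <= p j s -> 0 < r j -> y j <= 1 -> 0 <= score p r y j s.
Proof.
  intros Hp Hr Hy; unfold score.
  pose proof (g_le_1 _ Hy).
  apply Rmult_le_pos; [apply Rmult_le_pos |]; lra.
Qed.

(* Every value between 0 and c (1 - g 0) is attained by z |-> c (1 - g z)
   on [0,1]: explicitly z = 1 + ln (1 - M / c). *)
Lemma threshold_solvable c M :
  0 <= c -> 0 <= M <= c * (1 - g 0) ->
  exists z, 0 <= z <= 1 /\ c * (1 - g z) = M.
Proof.
  intros Hc HM.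
  assert (Hg0 : g 0 = exp (-1)) by (unfold g; f_equal; ring).
  assert (He : 0 < exp (-1)) by apply exp_pos.
  rewrite Hg0 in HM.
  destruct (Rle_lt_or_eq_dec _ _ Hc) as [Hcpos | <-].
  2: { exists 0; split; [lra | lra]. }
  set (u := 1 - M / c).
  assert (Hu_low : exp (-1) <= u).
  { assert (M / c <= 1 - exp (-1)).
    { apply Rmult_le_reg_r with c; [exact Hcpos |].
      unfold Rdiv; rewrite Rmult_assoc, Rinv_l, Rmult_1_r; lra. }
    unfold u; lra. }
  assert (Hu_high : u <= 1).
  { unfold u. assert (0 <= M / c) by (unfold Rdiv; apply Rmult_le_pos; [lra | left; apply Rinv_0_lt_compat; lra]). lra. }
  exists (1 + ln u); split.
  - pose proof (ln_le_mono _ _ He Hu_low) as Hlo.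
    pose proof (ln_le_mono u 1 ltac:(lra) Hu_high) as Hhi.
    rewrite ln_exp in Hlo; rewrite ln_1 in Hhi; lra.
  - unfold g; replace (1 + ln u - 1) with (ln u) by ring.
    rewrite exp_ln by lra. unfold u; field; lra.
Qed.

Lemma RiemannInt_ge_const (f : R -> R) a b c (pr : Riemann_integrable f a b) :
  a <= b -> (forall x, a <= x <= b -> c <= f x) -> c * (b - a) <= RiemannInt pr.
Proof.
  intros Hab Hf.
  rewrite <- (RiemannInt_P15 (RiemannInt_P14 a b c)).
  apply RiemannInt_P19; [exact Hab |].
  intros x Hx; unfold fct_cte; apply Hf; lra.
Qed.

Lemma choose_upto_None k cand sc :
  choose_upto k cand sc = None -> forall j, (j < k)%nat -> cand j = false.
Proof.
  induction k as [| k IH]; simpl; intros H j Hj; [lia |].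
  destruct (cand k) eqn:Hk.
  - destruct (choose_upto k cand sc); [destruct (Rlt_dec _ _) |]; discriminate.
  - destruct (Nat.eq_dec j k) as [-> | Hne]; [exact Hk |].
    apply IH; [exact H | lia].
Qed.

Definition greedy_choice k (cand : nat -> bool) (sc : nat -> R) x : Prop :=
  (x < k)%nat /\ cand x = true /\
  (forall j, (j < k)%nat -> cand j = true -> sc j <= sc x) /\
  (forall j, (j < x)%nat -> cand j = true -> sc j < sc x).

Lemma choose_upto_Some k cand sc x :
  choose_upto k cand sc = Some x -> greedy_choice k cand sc x.
Proof.
  revert x; induction k as [| k IH]; simpl; intros x H; [discriminate |].
  destruct (cand k) eqn:Hk.
  - destruct (choose_upto k cand sc) as [j |] eqn:E.
    + destruct (IH j eq_refl) as (Hj & Hcj & Hmax & Hfirst).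
      destruct (Rlt_dec (sc j) (sc k)) as [Hlt | Hge]; injection H as <-;
        repeat split; auto.
      * intros j' Hj' Hc'; destruct (Nat.eq_dec j' k) as [-> | Hne]; [lra |].
        specialize (Hmax j' ltac:(lia) Hc'); lra.
      * intros j' Hj' Hc'; specialize (Hmax j' ltac:(lia) Hc'); lra.
      * intros j' Hj' Hc'; destruct (Nat.eq_dec j' k) as [-> | Hne]; [lra |].
        apply Hmax; [lia | exact Hc'].
    + injection H as <-.
      pose proof (choose_upto_None _ _ _ E) as Hnone.
      repeat split; auto.
      * intros j' Hj' Hc'; destruct (Nat.eq_dec j' k) as [-> | Hne]; [lra |].
        rewrite (Hnone j' ltac:(lia)) in Hc'; discriminate.
      * intros j' Hj' Hc'; rewrite (Hnone j' ltac:(lia)) in Hc'; discriminate.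
  - destruct (IH x H) as (Hx & Hcx & Hmax & Hfirst); repeat split; auto.
    intros j' Hj' Hc'; destruct (Nat.eq_dec j' k) as [-> | Hne].
    + rewrite Hk in Hc'; discriminate.
    + apply Hmax; [lia | exact Hc'].
Qed.

Lemma greedy_choice_unique k cand sc x :
  greedy_choice k cand sc x -> choose_upto k cand sc = Some x.
Proof.
  intros (Hx & Hcx & Hmax & Hfirst).
  destruct (choose_upto k cand sc) as [z |] eqn:E.
  - destruct (choose_upto_Some _ _ _ _ E) as (Hz & Hcz & Hmaxz & Hfirstz).
    destruct (Nat.lt_trichotomy z x) as [Hlt | [-> | Hlt]]; [| reflexivity |].
    + specialize (Hfirst z Hlt Hcz); specialize (Hmaxz x Hx Hcx); lra.
    + specialize (Hfirstz x Hlt Hcx); specialize (Hmax z Hz Hcz); lra.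
  - rewrite (choose_upto_None _ _ _ E x Hx) in Hcx; discriminate.
Qed.

Lemma choose_upto_restrict k c1 c2 s1 s2 x :
  (forall j, c1 j = true -> c2 j = true) ->
  (forall j, c1 j = true -> s1 j = s2 j) ->
  choose_upto k c2 s2 = Some x -> c1 x = true ->
  choose_upto k c1 s1 = Some x.
Proof.
  intros Hsub Hsc H Hx.
  destruct (choose_upto_Some _ _ _ _ H) as (Hxk & _ & Hmax & Hfirst).
  apply greedy_choice_unique; repeat split; auto;
    intros j Hj Hcj; rewrite (Hsc j Hcj), (Hsc x Hx); auto.
Qed.

Section Runs.

Variables (n : nat) (adj : nat -> nat -> bool) (p : nat -> nat -> R)
  (r : nat -> R).

Lemma avail_present present w y s k :
  avail n adj p r present w y s k = true -> present k = true.
Proof.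
  revert k; induction s as [| s IH]; simpl; intros k H; [exact H |].
  destruct (choose n adj p r y (avail n adj p r present w y s) s) as [j |];
    [destruct (w j s) |]; auto.
  destruct (k =? j); [discriminate | auto].
Qed.

Lemma avail_past_only present w1 w2 y s :
  (forall j s', (s' < s)%nat -> w1 j s' = w2 j s') ->
  avail n adj p r present w1 y s = avail n adj p r present w2 y s.
Proof.
  induction s as [| s IH]; simpl; intros H; [reflexivity |].
  rewrite IH by (intros; apply H; lia).
  destruct (choose _ _ _ _ _ _ _) as [j |]; [| reflexivity].
  rewrite (H j s) by lia; reflexivity.
Qed.

(* Inductively, if the full run matches some such k at
   arrival s, then k is also a candidate in the run without i, with the same
   score, so it is matched there too. *)
Lemma avail_without_le_full w y y' i
  (Hseed : forall j, j <> i -> y' j = y j) s k :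
  avail n adj p r (fun k => negb (k =? i)) w y s k = true ->
  avail n adj p r (fun _ => true) w y' s k = true.
Proof.
  revert k; induction s as [| s IH]; simpl; intros k H; [reflexivity |].
  set (a1 := avail n adj p r (fun k => negb (k =? i)) w y s) in *.
  set (a2 := avail n adj p r (fun _ => true) w y' s) in *.
  assert (Hscore : forall j, (a1 j && adj j s)%bool = true ->
             score p r y j s = score p r y' j s).
  { intros j Hj; apply andb_prop in Hj as [Hj _].
    apply avail_present, Bool.negb_true_iff, Nat.eqb_neq in Hj.
    unfold score; rewrite Hseed; auto. }
  assert (Hcand : forall j, (a1 j && adj j s)%bool = true ->
             (a2 j && adj j s)%bool = true).
  { intros j Hj; apply andb_prop in Hj as [Hj Ha].
    rewrite (IH j Hj), Ha; reflexivity. }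
  assert (Hk1 : a1 k = true).
  { destruct (choose n adj p r y a1 s) as [z |]; [destruct (w z s) |]; auto.
    destruct (k =? z); [discriminate | exact H]. }
  destruct (choose n adj p r y' a2 s) as [x |] eqn:E2; [| auto].
  destruct (w x s) eqn:Wx; [| auto].
  destruct (k =? x) eqn:Kx; [| auto].
  apply Nat.eqb_eq in Kx; subst k; exfalso.
  destruct (choose_upto_Some _ _ _ _ E2) as (_ & Hcx & _).
  assert (E1 : choose n adj p r y a1 s = Some x).
  { apply (choose_upto_restrict _ _ _ _ _ _ Hcand Hscore E2).
    apply andb_prop in Hcx as [_ Ha]; rewrite Hk1, Ha; reflexivity. }
  rewrite E1, Wx, Nat.eqb_refl in H; discriminate.
Qed.

End Runs.

Lemma bexp_ext q k f1 f2 :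
  (forall b, f1 b = f2 b) -> bexp q k f1 = bexp q k f2.
Proof.
  revert f1 f2; induction k as [| k IH]; simpl; intros f1 f2 H; [apply H |].
  rewrite (IH (fun b => f1 (upd b k true)) (fun b => f2 (upd b k true)))
    by (intros; apply H).
  rewrite (IH (fun b => f1 (upd b k false)) (fun b => f2 (upd b k false)))
    by (intros; apply H).
  reflexivity.
Qed.

Lemma bexp_const q k c : bexp q k (fun _ => c) = c.
Proof. induction k as [| k IH]; simpl; [reflexivity | rewrite IH; ring]. Qed.

Lemma bexp_coordinate q k x (F : bool -> R) : (x < k)%nat ->
  bexp q k (fun b => F (b x)) = q x * F true + (1 - q x) * F false.
Proof.
  revert F; induction k as [| k IH]; simpl; intros F Hx; [lia |].
  destruct (Nat.eq_dec x k) as [-> | Hne].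
  - assert (Hupd : forall b v, upd b k v k = v)
      by (intros; unfold upd; rewrite Nat.eqb_refl; reflexivity).
    rewrite (bexp_ext _ _ _ (fun _ => F true)) by (intros; rewrite Hupd; reflexivity).
    rewrite (bexp_ext _ _ (fun b => F (upd b k false k)) (fun _ => F false))
      by (intros; rewrite Hupd; reflexivity).
    rewrite !bexp_const; reflexivity.
  - assert (Hupd : forall b v, upd b k v x = b x)
      by (intros; unfold upd; apply Nat.eqb_neq in Hne; rewrite Hne; reflexivity).
    rewrite (bexp_ext _ _ _ (fun b => F (b x))) by (intros; rewrite Hupd; reflexivity).
    rewrite (bexp_ext _ _ (fun b => F (upd b k false x)) (fun b => F (b x)))
      by (intros; rewrite Hupd; reflexivity).
    rewrite IH by lia; ring.
Qed.

Definition offered_score n adj p r w y t : R :=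
  match choose n adj p r y (avail n adj p r (fun _ => true) w y t) t with
  | Some x => score p r y x t
  | None => 0
  end.

Lemma cond_exp_lambda_offered n adj p r w y t :
  cond_exp_lambda n adj p r w y t = offered_score n adj p r w y t.
Proof.
  unfold cond_exp_lambda, lambda, offered_score.
  set (a := avail n adj p r (fun _ => true) w y t).
  assert (Hpast : forall b, avail n adj p r (fun _ => true) (merge w t b) y t = a).
  { intros b; apply avail_past_only; intros j s Hs.
    unfold merge; apply Nat.ltb_lt in Hs; rewrite Hs; reflexivity. }
  destruct (choose n adj p r y a t) as [x |] eqn:E.
  - destruct (choose_upto_Some _ _ _ _ E) as (Hx & _).
    set (F := fun bx : bool => r x * (1 - g (y x)) * (if bx then 1 else 0)).
    rewrite (bexp_ext _ _ _ (fun b => F (b x))).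
    + rewrite bexp_coordinate by exact Hx; unfold F, score; ring.
    + intros b; rewrite Hpast, E.
      unfold merge; rewrite Nat.ltb_irrefl, Nat.eqb_refl; reflexivity.
  - rewrite (bexp_ext _ _ _ (fun _ => 0)) by (intros b; rewrite Hpast, E; reflexivity).
    apply bexp_const.
Qed.

(* I^t_{-i} is empty or has an element of maximal score (the choice of t in
   the run without i). *)
Lemma I_minus_empty_or_max n adj p r w y i t :
  (forall j, ~ in_I_minus n adj p r w y i t j) \/
  (exists j0, in_I_minus n adj p r w y i t j0 /\
     forall j, in_I_minus n adj p r w y i t j -> score p r y j t <= score p r y j0 t).
Proof.
  set (a1 := avail n adj p r (fun k => negb (k =? i)) w y t).
  destruct (choose n adj p r y a1 t) as [j0 |] eqn:E.
  - right; exists j0.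
    destruct (choose_upto_Some _ _ _ _ E) as (Hj0 & Hc & Hmax & _).
    apply andb_prop in Hc as [Ha Hadj].
    split.
    + repeat split; auto.
      apply avail_present, Bool.negb_true_iff, Nat.eqb_neq in Ha; exact Ha.
    + intros j (Hj & _ & Hadjj & Havj); apply Hmax; [exact Hj |].
      simpl; unfold a1; rewrite Havj, Hadjj; reflexivity.
  - left; intros j (Hj & _ & Hadjj & Havj).
    pose proof (choose_upto_None _ _ _ E j Hj) as Hc; simpl in Hc.
    unfold a1 in Hc; rewrite Havj, Hadjj in Hc; discriminate.
Qed.

Lemma offered_score_ge_I_minus n adj p r w y i yi t j :
  in_I_minus n adj p r w y i t j ->
  score p r y j t <= offered_score n adj p r w (set_seed y i yi) t.
Proof.
  intros (Hj & Hji & Hadj & Hav).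
  set (y' := set_seed y i yi).
  assert (Hseed : forall k, k <> i -> y' k = y k).
  { intros k Hk; unfold y', set_seed; apply Nat.eqb_neq in Hk; rewrite Hk; reflexivity. }
  pose proof (avail_without_le_full _ _ _ _ _ _ _ _ Hseed _ _ Hav) as Hfull.
  unfold offered_score.
  destruct (choose n adj p r y' (avail n adj p r (fun _ => true) w y' t) t)
    as [x |] eqn:E.
  - destruct (choose_upto_Some _ _ _ _ E) as (_ & _ & Hmax & _).
    specialize (Hmax j Hj ltac:(simpl; rewrite Hfull, Hadj; reflexivity)).
    unfold score in Hmax |- *; rewrite Hseed in Hmax by exact Hji; exact Hmax.
  - pose proof (choose_upto_None _ _ _ E j Hj) as Hc; simpl in Hc.
    rewrite Hfull, Hadj in Hc; discriminate.
Qed.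

Lemma offered_score_nonneg n adj p r w y t :
  (forall j s, 0 <= p j s <= 1) -> (forall j, 0 < r j) -> (forall j, y j <= 1) ->
  0 <= offered_score n adj p r w y t.
Proof.
  intros Hp Hr Hy; unfold offered_score.
  destruct (choose _ _ _ _ _ _ _); [apply score_nonneg; [apply Hp | apply Hr | apply Hy] | lra].
Qed.

Lemma g_1 : g 1 = 1.
Proof. unfold g; replace (1 - 1) with 0 by ring; apply exp_0. Qed.

(* If c (1 - g z) = sc j0 has no solution z in [0,1], then yc = 0 and
   sc j0 > c (1 - g 0) by [threshold_solvable]. *)
Lemma threshold_le_max (P : nat -> Prop) (sc : nat -> R) c yc j0
  (Hc : 0 <= c)
  (Hsol : forall M, (exists j, P j /\ M = sc j) -> (forall j, P j -> sc j <= M) ->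
     (exists z, 0 <= z <= 1 /\ c * (1 - g z) = M) -> 0 <= yc <= 1 /\ c * (1 - g yc) = M)
  (Hnone : forall M, (exists j, P j /\ M = sc j) -> (forall j, P j -> sc j <= M) ->
     ~ (exists z, 0 <= z <= 1 /\ c * (1 - g z) = M) -> yc = 0)
  (Hj0 : P j0) (Hmax : forall j, P j -> sc j <= sc j0) (Hsc0 : 0 <= sc j0) :
  c * (1 - g yc) <= sc j0.
Proof.
  assert (Hattained : exists j, P j /\ sc j0 = sc j) by (exists j0; auto).
  destruct (classic (exists z, 0 <= z <= 1 /\ c * (1 - g z) = sc j0)) as [Hz | Hz].
  - destruct (Hsol _ Hattained Hmax Hz) as [_ ->]; lra.
  - rewrite (Hnone _ Hattained Hmax Hz).
    destruct (Rle_or_lt (sc j0) (c * (1 - g 0))) as [Hle | Hlt]; [| lra].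
    exfalso; apply Hz, threshold_solvable; lra.
Qed.

Theorem lemma3
  (n : nat) (adj : nat -> nat -> bool) (p : nat -> nat -> R) (r : nat -> R)
  (hp : forall j s, 0 <= p j s <= 1) (hr : forall j, 0 < r j)
  (i t : nat) (hi : (i < n)%nat) (hedge : adj i t = true)
  (w : nat -> nat -> bool)            (* only w j s with s < t matter: omega_{t-1} *)
  (y : nat -> R) (hy : forall j, j <> i -> 0 <= y j <= 1)   (* Y_{-i} *)
  (yc : R)
  (hyc_empty : (forall j, ~ in_I_minus n adj p r w y i t j) -> yc = 1)
  (hyc_sol : forall M,
      (exists j, in_I_minus n adj p r w y i t j /\ M = score p r y j t) ->
      (forall j, in_I_minus n adj p r w y i t j -> score p r y j t <= M) ->
      (exists z, 0 <= z <= 1 /\ p i t * r i * (1 - g z) = M) ->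
      0 <= yc <= 1 /\ p i t * r i * (1 - g yc) = M)
  (hyc_none : forall M,
      (exists j, in_I_minus n adj p r w y i t j /\ M = score p r y j t) ->
      (forall j, in_I_minus n adj p r w y i t j -> score p r y j t <= M) ->
      ~ (exists z, 0 <= z <= 1 /\ p i t * r i * (1 - g z) = M) ->
      yc = 0) :
  (forall yi, 0 <= yi <= 1 ->
     cond_exp_lambda n adj p r w (set_seed y i yi) t >= p i t * r i * (1 - g yc))
  /\
  (forall pr : Riemann_integrable
                 (fun yi => cond_exp_lambda n adj p r w (set_seed y i yi) t) 0 1,
     RiemannInt pr >= p i t * r i * (1 - g yc)).
Proof.
  assert (Hc : 0 <= p i t * r i) by (pose proof (hp i t); pose proof (hr i); nra).
  assert (Hpointwise : forall yi, 0 <= yi <= 1 ->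
     p i t * r i * (1 - g yc) <= cond_exp_lambda n adj p r w (set_seed y i yi) t).
  { intros yi Hyi; rewrite cond_exp_lambda_offered.
    destruct (I_minus_empty_or_max n adj p r w y i t) as [Hempty | (j0 & Hj0 & Hmax)].
    - rewrite (hyc_empty Hempty), g_1, Rminus_diag, Rmult_0_r.
      apply offered_score_nonneg; auto.
      intros j; unfold set_seed; destruct (j =? i) eqn:Hji; [lra |].
      apply Nat.eqb_neq in Hji; apply hy; exact Hji.
    - apply Rle_trans with (score p r y j0 t).
      + apply (threshold_le_max _ _ _ _ _ Hc hyc_sol hyc_none Hj0 Hmax).
        destruct Hj0 as (_ & Hj0i & _).
        apply score_nonneg; [apply hp | apply hr | apply hy; exact Hj0i].
      + apply offered_score_ge_I_minus; exact Hj0. }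
  split.
  - intros yi Hyi; apply Rle_ge, Hpointwise, Hyi.
  - intros pr; apply Rle_ge.
    apply Rle_trans with (p i t * r i * (1 - g yc) * (1 - 0)); [right; ring |].
    apply RiemannInt_ge_const; [lra | exact Hpointwise].
Qed.
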